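(* Any correlated multi-secret sharing scheme for any joint distribution $p_{XYZ}$ on finite sets satisfies \begin{align*} H(M_{12})&\ge\max\{RI(X;Z),RI(Y;Z)\}+H(X,Y|Z),\\ H(M_{23})&\ge\max\{RI(X;Z),RI(X;Y)\}+H(Y,Z|X),\\ H(M_{31})&\ge\max\{RI(Y;Z),RI(X;Y)\}+H(X,Z|Y). \end{align*}
   Context: A correlated multi-secret sharing (CMSS) scheme for a joint distribution $p_{XYZ}$ on finite sets is a conditional distribution $p_{M_{12}M_{23}M_{31}|XYZ}$ mapping secrets $(X,Y,Z)\sim p_{XYZ}$ probabilistically to shares $(M_{12},M_{23},M_{31})$ such that (correctness) $H(X|M_{12},M_{31})=H(Y|M_{12},M_{23})=H(Z|M_{23},M_{31})=0$ and (privacy) $I((M_{12},M_{31});(Y,Z)|X)=0$, $I((M_{12},M_{23});(X,Z)|Y)=0$, $I((M_{23},M_{31});(X,Y)|Z)=0$. Residual information: $RI(U;V)=I(U;V)-H(U\sqcap V)$, where $U\sqcap V$ has maximum entropy among random variables of the form $f(U)=g(V)$ for deterministic $f,g$. *)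

From mathcomp Require Import all_boot all_order all_algebra.
From mathcomp Require Import all_classical all_reals all_analysis.
Set Implicit Arguments. Unset Strict Implicit. Unset Printing Implicit Defensive.
Import Order.TTheory GRing.Theory Num.Theory.
Local Open Scope ring_scope.

Definition is_pmf {R : realType} {T : finType} (p : T -> R) : Prop :=
  (forall t, 0 <= p t) /\ \sum_(t : T) p t = 1.

Definition log2 {R : realType} (x : R) : R := ln x / ln 2.

Section Info.
Context {R : realType} {Om : finType} (P : Om -> R).

Definition pr_of {A : finType} (f : Om -> A) (a : A) : R :=
  \sum_(w | f w == a) P w.

(* Shannon entropy (bits); ln 0 = 0 so 0 log 0 = 0 *)
Definition entropy {A : finType} (f : Om -> A) : R :=
  - \sum_(a : A) pr_of f a * log2 (pr_of f a).

Definition pairRV {A B : finType} (f : Om -> A) (g : Om -> B) : Om -> A * B :=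
  fun w => (f w, g w).

Definition cond_entropy {A B : finType} (f : Om -> A) (g : Om -> B) : R :=
  entropy (pairRV f g) - entropy g.

Definition mutual_info {A B : finType} (f : Om -> A) (g : Om -> B) : R :=
  entropy f + entropy g - entropy (pairRV f g).

Definition cond_mutual_info {A B C : finType}
  (f : Om -> A) (g : Om -> B) (h : Om -> C) : R :=
  entropy (pairRV f h) + entropy (pairRV g h)
  - entropy (pairRV (pairRV f g) h) - entropy h.

Definition common_fun {A B W : finType} (U : Om -> A) (V : Om -> B)
  (f : A -> W) (g : B -> W) : bool :=
  [forall w, (P w != 0) ==> (f (U w) == g (V w))].

(* H(U ⊓ V): maximal entropy of a common function f(U) = g(V).  The
   codomain is taken to be A (the alphabet of U), which loses no generality
   since f(U) takes at most #|A| values. *)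
Definition common_entropy {A B : finType} (U : Om -> A) (V : Om -> B) : R :=
  \big[Num.max/0]_(fg : {ffun A -> A} * {ffun B -> A} | common_fun U V fg.1 fg.2)
     entropy (fun w => fg.1 (U w)).

Definition residual_info {A B : finType} (U : Om -> A) (V : Om -> B) : R :=
  mutual_info U V - common_entropy U V.

End Info.

Section CMSS.
Context {R : realType} {X Y Z M12 M23 M31 : finType}.

Definition Omega := ((X * Y * Z) * (M12 * M23 * M31))%type.

Definition joint (p : X * Y * Z -> R) (q : X * Y * Z -> M12 * M23 * M31 -> R)
  : Omega -> R := fun w => p w.1 * q w.1 w.2.

Definition rvX (w : Omega) : X := w.1.1.1.
Definition rvY (w : Omega) : Y := w.1.1.2.
Definition rvZ (w : Omega) : Z := w.1.2.
Definition rvM12 (w : Omega) : M12 := w.2.1.1.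
Definition rvM23 (w : Omega) : M23 := w.2.1.2.
Definition rvM31 (w : Omega) : M31 := w.2.2.

Definition is_CMSS (p : X * Y * Z -> R) (q : X * Y * Z -> M12 * M23 * M31 -> R)
  : Prop :=
  let P := joint p q in
  (forall s, is_pmf (q s)) /\
  cond_entropy P rvX (pairRV rvM12 rvM31) = 0 /\
  cond_entropy P rvY (pairRV rvM12 rvM23) = 0 /\
  cond_entropy P rvZ (pairRV rvM23 rvM31) = 0 /\
  cond_mutual_info P (pairRV rvM12 rvM31) (pairRV rvY rvZ) rvX = 0 /\
  cond_mutual_info P (pairRV rvM12 rvM23) (pairRV rvX rvZ) rvY = 0 /\
  cond_mutual_info P (pairRV rvM23 rvM31) (pairRV rvX rvY) rvZ = 0.

End CMSS.

From mathcomp Require Import all_boot all_order all_algebra.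
From mathcomp Require Import all_classical all_reals all_analysis.
From mathcomp Require Import ring lra.
Set Implicit Arguments. Unset Strict Implicit. Unset Printing Implicit Defensive.
Import Order.TTheory GRing.Theory Num.Theory.
Local Open Scope ring_scope.

(* Write party a's shares as (Mab, Mca), and cyclically.  Submodularity of
   entropy together with recoverability gives
     H(Mab) >= I(Mab; Mbc | Mca) + H(Sa, Sb | Sc).
   Privacy makes Mca - Sa - Sc and Mca - Sc - Sa Markov chains, so the
   conditional law of Mca given Sa is a common function of Sa and Sc; hence
   I(Sa; Mca) <= H(Sa /\ Sc).  Since Sa and Sc are functions of (Mab, Mca) and
   (Mbc, Mca), also I(Sa; Sc) <= I(Sa; Mca) + I(Mab; Mbc | Mca), and therefore
   RI(Sa; Sc) <= I(Mab; Mbc | Mca).  The six inequalities of the theorem are the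
   instances of this bound under the permutations of the three parties. *)

Section LnSubr1.
Variable R : realType.

Lemma ln_le_subr1 (x : R) : 0 < x -> ln x <= x - 1.
Proof. by move=> x_gt0; have := expR_ge1Dx (ln x); rewrite lnK ?posrE //; lra. Qed.

(* Apply the bound at [sqrt x]: equality at [x] forces [(sqrt x - 1)^2 = 0]. *)
Lemma ln_eq_subr1 (x : R) : 0 < x -> ln x = x - 1 -> x = 1.
Proof.
move=> x_gt0 lnx.
have s_gt0 : 0 < Num.sqrt x by rewrite sqrtr_gt0.
have xE : x = Num.sqrt x * Num.sqrt x by rewrite -expr2 sqr_sqrtr // ltW.
have lnxE : ln x = ln (Num.sqrt x) + ln (Num.sqrt x) by rewrite {1}xE lnM ?posrE.
have := ln_le_subr1 s_gt0.
move: (Num.sqrt x) s_gt0 xE lnxE => s s_gt0 xE lnxE lns.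
have s1 : s = 1 by nra.
by rewrite xE s1 mulr1.
Qed.

End LnSubr1.

Section Gibbs.
Variables (R : realType) (T : finType) (a b : T -> R).
Hypotheses (a_ge0 : forall t, 0 <= a t) (b_ge0 : forall t, 0 <= b t)
  (b_gt0 : forall t, 0 < a t -> 0 < b t) (sum_b_le : \sum_t b t <= \sum_t a t).

Let slack t := a t * (ln (a t) - ln (b t)) - (a t - b t).

Let slack_ge0 t : 0 <= slack t.
Proof.
rewrite /slack subr_ge0.
have [->|a_neq0] := eqVneq (a t) 0; first by rewrite mul0r sub0r oppr_le0.
have a_gt0 : 0 < a t by rewrite lt_def a_neq0 a_ge0.
have ba_gt0 : 0 < b t / a t by rewrite divr_gt0 ?b_gt0.
have := ln_le_subr1 ba_gt0; rewrite ln_div ?posrE ?b_gt0 // => ln_ba.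
have -> : a t - b t = a t * (1 - b t / a t) by field.
by rewrite ler_wpM2l ?a_ge0 //; lra.
Qed.

Lemma gibbs_inequality : 0 <= \sum_t a t * (ln (a t) - ln (b t)).
Proof.
have : 0 <= \sum_t slack t by apply: sumr_ge0 => t _; apply: slack_ge0.
rewrite /slack sumrB sumrB => /le_trans; apply.
by rewrite lerBlDr lerDl subr_ge0.
Qed.

Lemma gibbs_eq0 : \sum_t a t * (ln (a t) - ln (b t)) = 0 -> a =1 b.
Proof.
move=> sum0.
have sum_slack0 : \sum_t slack t = 0.
  apply/eqP; rewrite eq_le sumr_ge0 ?andbT => [|t _]; last exact: slack_ge0.
  by rewrite /slack sumrB sum0 sumrB sub0r oppr_le0 subr_ge0.
move=> t; have := psumr_eq0P (fun t _ => slack_ge0 t) sum_slack0 (i := t) isT.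
rewrite /slack /=.
have [a0|a_neq0] := eqVneq (a t) 0; first by rewrite a0 mul0r; lra.
have a_gt0 : 0 < a t by rewrite lt_def a_neq0 a_ge0.
have ba_gt0 : 0 < b t / a t by rewrite divr_gt0 ?b_gt0.
move=> eq_slack; suff : b t / a t = 1 by move/divr1_eq.
apply: ln_eq_subr1 => //; rewrite ln_div ?posrE ?b_gt0 //.
apply: (mulfI a_neq0); rewrite mulrBr mulrBr mulr1 mulrCA divff // mulr1.
by move: eq_slack; rewrite mulrBr; lra.
Qed.
End Gibbs.


Definition same_info {Om : Type} {A B : eqType} (f : Om -> A) (g : Om -> B) :=
  forall w w', (f w == f w') = (g w == g w').

Definition determines {Om : Type} {A B : eqType} (g : Om -> B) (f : Om -> A) :=
  forall w w', g w == g w' -> f w == f w'.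

(* Decides the boolean identities between equalities of tuples of random
   variables, by case analysis on the elementary comparisons. *)
Ltac solve_pair_eq := let w := fresh "w" in let w' := fresh "w'" in
  move=> w w'; try rewrite /pairRV; rewrite /= ?xpair_eqE;
  repeat match goal with |- context [?a == ?b] => case: (a == b) end; by [].

Ltac solve_pair_eq_using h1 h2 := let w := fresh "w" in let w' := fresh "w'" in
  move=> w w'; move: (h1 w w') (h2 w w'); try rewrite /pairRV; rewrite /= ?xpair_eqE;
  move=> /implyP + /implyP +;
  repeat match goal with |- context [?a == ?b] => case: (a == b) end; by [].

Section Distribution.
Variables (R : realType) (Om : finType) (P : Om -> R).
Hypothesis P_ge0 : forall w, 0 <= P w.

Lemma sum_pr_of (A : finType) (f : Om -> A) (F : A -> R) :
  \sum_w P w * F (f w) = \sum_a pr_of P f a * F a.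
Proof.
rewrite (partition_big f xpredT) //=; apply: eq_bigr => a _.
by rewrite /pr_of big_distrl /=; apply: eq_bigr => w /eqP ->.
Qed.

Lemma sum_pr_of_mass (A : finType) (f : Om -> A) : \sum_a pr_of P f a = \sum_w P w.
Proof.
have := sum_pr_of f (fun _ => 1).
by under eq_bigr do rewrite mulr1; under [X in _ = X -> _]eq_bigr do rewrite mulr1.
Qed.

Lemma entropyE (A : finType) (f : Om -> A) :
  entropy P f = - \sum_w P w * log2 (pr_of P f (f w)).
Proof. by rewrite /entropy (sum_pr_of f (fun a => log2 (pr_of P f a))). Qed.

Lemma pr_of_ge0 (A : finType) (f : Om -> A) a : 0 <= pr_of P f a.
Proof. exact: sumr_ge0. Qed.

Lemma pr_of_le (A B : finType) (f : Om -> A) (g : Om -> B) a b :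
  (forall w, f w == a -> g w == b) -> pr_of P f a <= pr_of P g b.
Proof.
move=> fg; rewrite /pr_of [leLHS]big_mkcond [leRHS]big_mkcond /=.
apply: ler_sum => w _.
by case: ifP => [/fg -> //|_]; case: ifP.
Qed.

Lemma pr_of_self (A : finType) (f : Om -> A) w : P w <= pr_of P f (f w).
Proof. by rewrite /pr_of (bigD1 w) //= lerDl; apply: sumr_ge0. Qed.

Lemma pr_of_pairC (A B : finType) (f : Om -> A) (g : Om -> B) a b :
  pr_of P (pairRV f g) (a, b) = pr_of P (pairRV g f) (b, a).
Proof. by apply: eq_bigl => w; rewrite /pairRV !xpair_eqE andbC. Qed.

Lemma sum_pr_of_pair (A C : finType) (f : Om -> A) (h : Om -> C) c :
  \sum_a pr_of P (pairRV f h) (a, c) = pr_of P h c.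
Proof.
rewrite /pr_of (partition_big f xpredT) //=; apply: eq_bigr => a _.
by apply: eq_bigl => w; rewrite /pairRV xpair_eqE andbC.
Qed.

Lemma pr_of_pair_comp (A D : finType) (f : Om -> A) (h : A -> D) a d :
  pr_of P (pairRV f (fun w => h (f w))) (a, d) = if h a == d then pr_of P f a else 0.
Proof.
case: ifP => [/eqP <-|had].
  by apply: eq_bigl => w; rewrite xpair_eqE andb_idr // => /eqP ->.
by apply: big1 => w; rewrite xpair_eqE => /andP[/eqP ->]; rewrite had.
Qed.

Lemma entropy_same_info (A B : finType) (f : Om -> A) (g : Om -> B) :
  same_info f g -> entropy P f = entropy P g.
Proof.
move=> fg; rewrite !entropyE; congr (- _); apply: eq_bigr => w _.
by congr (_ * log2 _); apply: eq_bigl => w'; rewrite eq_sym fg eq_sym.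
Qed.

Section CondMutualInfo.
Variables (A B C : finType) (fa : Om -> A) (fb : Om -> B) (fc : Om -> C).

Let pABC (t : A * B * C) := pr_of P (pairRV (pairRV fa fb) fc) t.
Let pAC (t : A * B * C) := pr_of P (pairRV fa fc) (t.1.1, t.2).
Let pBC (t : A * B * C) := pr_of P (pairRV fb fc) (t.1.2, t.2).
Let pC (t : A * B * C) := pr_of P fc t.2.
(* The joint law that makes [fa] and [fb] independent given [fc]. *)
Let pInd t := pAC t * pBC t / pC t.

Let ln2_gt0 : 0 < ln 2 :> R.
Proof. by rewrite ln_gt0 // ltr1n. Qed.

Let pABC_le_pAC t : pABC t <= pAC t.
Proof.
by case: t => [[a b] c]; apply: pr_of_le => w; rewrite !xpair_eqE => /andP[/andP[-> _] ->].
Qed.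

Let pABC_le_pBC t : pABC t <= pBC t.
Proof.
by case: t => [[a b] c]; apply: pr_of_le => w; rewrite !xpair_eqE => /andP[/andP[_ ->] ->].
Qed.

Let pAC_le_pC t : pAC t <= pC t.
Proof. by case: t => [[a b] c]; apply: pr_of_le => w; rewrite !xpair_eqE => /andP[]. Qed.

Let pInd_gt0 t : 0 < pABC t -> 0 < pInd t.
Proof.
move=> p_gt0; rewrite /pInd divr_gt0 ?mulr_gt0 //.
- exact: lt_le_trans p_gt0 (pABC_le_pAC t).
- exact: lt_le_trans p_gt0 (pABC_le_pBC t).
- exact: lt_le_trans p_gt0 (le_trans (pABC_le_pAC t) (pAC_le_pC t)).
Qed.

Let pInd_ge0 t : 0 <= pInd t.
Proof. by rewrite /pInd divr_ge0 ?mulr_ge0 ?pr_of_ge0. Qed.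

Let sum_pInd_le : \sum_t pInd t <= \sum_t pABC t.
Proof.
rewrite [leRHS]sum_pr_of_mass -(sum_pr_of_mass fc).
have -> : \sum_t pInd t = \sum_c \sum_a \sum_b
    pr_of P (pairRV fa fc) (a, c) * pr_of P (pairRV fb fc) (b, c) / pr_of P fc c.
  rewrite -(pair_bigA _ (fun ab c => pInd (ab, c))).
  rewrite -(pair_bigA _ (fun a b => \sum_c pInd (a, b, c))) /=.
  by under eq_bigr do rewrite exchange_big; rewrite exchange_big.
apply: ler_sum => c _.
under eq_bigr do rewrite -mulr_suml -mulr_sumr sum_pr_of_pair.
rewrite -mulr_suml -mulr_suml sum_pr_of_pair.
by have [->|c_neq0] := eqVneq (pr_of P fc c) 0; rewrite ?mul0r // mulfK.
Qed.

Let cond_mutual_info_ln :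
  cond_mutual_info P fa fb fc * ln 2 = \sum_t pABC t * (ln (pABC t) - ln (pInd t)).
Proof.
rewrite -(sum_pr_of _ (fun t => ln (pABC t) - ln (pInd t))).
rewrite /cond_mutual_info !entropyE /log2 -!sumrN -!big_split big_distrl /=.
apply: eq_bigr => w _.
have [->|P_neq0] := eqVneq (P w) 0; first by rewrite !(mul0r, oppr0, subr0).
have P_gt0 : 0 < P w by rewrite lt_def P_neq0 P_ge0.
have pos (D : finType) (f : Om -> D) : 0 < pr_of P f (f w).
  exact: lt_le_trans P_gt0 (pr_of_self f w).
rewrite /pInd /pABC /pAC /pBC /pC /= ln_div ?lnM ?posrE ?mulr_gt0 ?pos //.
by field; rewrite gt_eqF.
Qed.

Lemma cond_mutual_info_ge0 : 0 <= cond_mutual_info P fa fb fc.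
Proof.
rewrite -(pmulr_lge0 _ ln2_gt0) cond_mutual_info_ln.
exact: (gibbs_inequality (fun t => pr_of_ge0 _ t) pInd_ge0 pInd_gt0 sum_pInd_le).
Qed.

Lemma cond_mutual_info_eq0P : cond_mutual_info P fa fb fc = 0 <->
  forall a b c, pr_of P (pairRV (pairRV fa fb) fc) (a, b, c) * pr_of P fc c =
                pr_of P (pairRV fa fc) (a, c) * pr_of P (pairRV fb fc) (b, c).
Proof.
split=> [cmi0 a b c | indep].
  have sum0 : \sum_t pABC t * (ln (pABC t) - ln (pInd t)) = 0.
    by rewrite -cond_mutual_info_ln cmi0 mul0r.
  have := gibbs_eq0 (fun t => pr_of_ge0 _ t) pInd_ge0 pInd_gt0 sum_pInd_le sum0 (a, b, c).
  rewrite /pInd /pABC /pAC /pBC /pC /= => ->.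
  have [c0|c_neq0] := eqVneq (pr_of P fc c) 0; last by rewrite mulfVK.
  suff -> : pr_of P (pairRV fa fc) (a, c) = 0 by rewrite c0 !(mul0r, mulr0).
  by apply/eqP; rewrite eq_le pr_of_ge0 andbT -c0 (pAC_le_pC (a, b, c)).
apply: (mulIf (lt0r_neq0 ln2_gt0)); rewrite mul0r cond_mutual_info_ln.
apply: big1 => -[[a b] c] _.
have [->|p_neq0] := eqVneq (pABC (a, b, c)) 0; first by rewrite mul0r.
have p_gt0 : 0 < pABC (a, b, c) by rewrite lt_def p_neq0 pr_of_ge0.
have pC_gt0 : 0 < pC (a, b, c).
  exact: lt_le_trans p_gt0 (le_trans (pABC_le_pAC _) (pAC_le_pC _)).
suff -> : pInd (a, b, c) = pABC (a, b, c) by rewrite subrr mulr0.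
by rewrite /pInd /pABC /pAC /pBC /= -indep mulfK ?gt_eqF.
Qed.

End CondMutualInfo.

End Distribution.

Section ShannonInequalities.
Variables (R : realType) (Om : finType) (P : Om -> R).
Hypothesis P_ge0 : forall w, 0 <= P w.

Lemma same_info_pair (A A' B B' : finType) (f : Om -> A) (f' : Om -> A')
    (g : Om -> B) (g' : Om -> B') :
  same_info f f' -> same_info g g' -> same_info (pairRV f g) (pairRV f' g').
Proof. by move=> ff gg w w'; rewrite /pairRV !xpair_eqE ff gg. Qed.

Lemma cond_entropy_same_info (A A' B B' : finType) (f : Om -> A) (f' : Om -> A')
    (g : Om -> B) (g' : Om -> B') :
  same_info f f' -> same_info g g' -> cond_entropy P f g = cond_entropy P f' g'.
Proof.
move=> ff gg; rewrite /cond_entropy (entropy_same_info P gg).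
by rewrite (entropy_same_info P (same_info_pair ff gg)).
Qed.

Lemma cond_entropy_pairC (A B C : finType) (f : Om -> A) (g : Om -> B) (h : Om -> C) :
  cond_entropy P (pairRV f g) h = cond_entropy P (pairRV g f) h.
Proof. by apply: cond_entropy_same_info; solve_pair_eq. Qed.

Lemma cond_mutual_info_same_info (A A' B B' C C' : finType) (f : Om -> A)
    (f' : Om -> A') (g : Om -> B) (g' : Om -> B') (h : Om -> C) (h' : Om -> C') :
  same_info f f' -> same_info g g' -> same_info h h' ->
  cond_mutual_info P f g h = cond_mutual_info P f' g' h'.
Proof.
move=> ff gg hh; rewrite /cond_mutual_info (entropy_same_info P hh).
rewrite (entropy_same_info P (same_info_pair ff hh)).
rewrite (entropy_same_info P (same_info_pair gg hh)).
by rewrite (entropy_same_info P (same_info_pair (same_info_pair ff gg) hh)).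
Qed.

Lemma cond_mutual_infoC (A B C : finType) (f : Om -> A) (g : Om -> B) (h : Om -> C) :
  cond_mutual_info P f g h = cond_mutual_info P g f h.
Proof.
rewrite /cond_mutual_info.
have -> : entropy P (pairRV (pairRV f g) h) = entropy P (pairRV (pairRV g f) h).
  by apply: entropy_same_info; solve_pair_eq.
lra.
Qed.

Lemma entropy_submod (A B J K : finType) (F : Om -> A) (G : Om -> B)
    (FG : Om -> J) (H : Om -> K) :
  same_info FG (pairRV F G) -> determines F H -> determines G H ->
  entropy P FG + entropy P H <= entropy P F + entropy P G.
Proof.
move=> FG_FG FH GH; have := cond_mutual_info_ge0 P_ge0 F G H.
have pairH (D : finType) (D' : Om -> D) : determines D' H -> same_info (pairRV D' H) D'.
  by move=> DH w w'; rewrite /pairRV xpair_eqE; case: eqP => [/eqP/DH|].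
rewrite /cond_mutual_info (entropy_same_info P (pairH _ _ FH)).
rewrite (entropy_same_info P (pairH _ _ GH)).
rewrite (@entropy_same_info _ _ P _ _ (pairRV (pairRV F G) H) FG); first lra.
move=> w w'; rewrite FG_FG /pairRV !xpair_eqE.
by case: eqP => //= /eqP/FH ->; rewrite andbT.
Qed.

Lemma entropy_le_determines (A B : finType) (F : Om -> A) (G : Om -> B) :
  determines G F -> entropy P F <= entropy P G.
Proof.
by move=> GF; have := @entropy_submod _ _ _ _ G G G F ltac:(solve_pair_eq) GF GF; lra.
Qed.

Lemma cond_mutual_info_le (A A' B B' C : finType) (F : Om -> A) (F' : Om -> A')
    (G : Om -> B) (G' : Om -> B') (H : Om -> C) :
  determines F' F -> determines G' G ->
  cond_mutual_info P F G H <= cond_mutual_info P F' G' H.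
Proof.
move=> F'F G'G.
have le_F : entropy P (pairRV (pairRV F' G) H) + entropy P (pairRV F H) <=
    entropy P (pairRV F' H) + entropy P (pairRV (pairRV F G) H).
  by apply: entropy_submod; solve_pair_eq_using F'F G'G.
have le_G : entropy P (pairRV (pairRV F' G') H) + entropy P (pairRV G H) <=
    entropy P (pairRV G' H) + entropy P (pairRV (pairRV F' G) H).
  by apply: entropy_submod; solve_pair_eq_using F'F G'G.
rewrite /cond_mutual_info; lra.
Qed.

Lemma mutual_info_le_add_cond_mutual_info (A B MA MB WT : finType) (U : Om -> A)
    (V : Om -> B) (MU : Om -> MA) (MV : Om -> MB) (W : Om -> WT) :
  cond_entropy P U (pairRV MU W) = 0 -> cond_entropy P V (pairRV MV W) = 0 ->
  mutual_info P U V <= mutual_info P U W + cond_mutual_info P MU MV W.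
Proof.
move=> U_MUW V_MVW.
have le_UVW : entropy P (pairRV (pairRV U V) W) + entropy P V <=
    entropy P (pairRV U V) + entropy P (pairRV V W).
  by apply: entropy_submod; solve_pair_eq.
pose UVMUW := pairRV (pairRV U V) (pairRV MU W).
have le_UVMUW : entropy P UVMUW + entropy P (pairRV U W) <=
    entropy P (pairRV U (pairRV MU W)) + entropy P (pairRV (pairRV U V) W).
  by apply: entropy_submod; rewrite /UVMUW; solve_pair_eq.
have le_UVMUWMV : entropy P (pairRV UVMUW MV) + entropy P (pairRV V W) <=
    entropy P (pairRV V (pairRV MV W)) + entropy P UVMUW.
  by apply: entropy_submod; rewrite /UVMUW; solve_pair_eq.
have le_MUMVW : entropy P (pairRV (pairRV MU MV) W) <= entropy P (pairRV UVMUW MV).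
  by apply: entropy_le_determines; rewrite /UVMUW; solve_pair_eq.
move: U_MUW V_MVW; rewrite /mutual_info /cond_mutual_info /cond_entropy; lra.
Qed.

Hypothesis P_sum1 : \sum_w P w = 1.

Lemma entropy_pair_le (A B : finType) (F : Om -> A) (G : Om -> B) :
  entropy P (pairRV F G) <= entropy P F + entropy P G.
Proof.
have entropy_const : entropy P (fun _ => tt) = 0.
  rewrite /entropy (big_pred1 tt) => [|[]//].
  have -> : pr_of P (fun _ => tt) tt = 1 by rewrite /pr_of -P_sum1; apply: eq_bigl.
  by rewrite /log2 ln1 mul0r mulr0 oppr0.
have := @entropy_submod _ _ _ _ F G (pairRV F G) (fun _ => tt).
by rewrite entropy_const addr0; apply; [solve_pair_eq | move=> ? ? | move=> ? ?].
Qed.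

End ShannonInequalities.

Section CommonInformation.
Variables (R : realType) (Om : finType) (P : Om -> R).
Hypothesis P_ge0 : forall w, 0 <= P w.
Variables (A B WT : finType) (U : Om -> A) (V : Om -> B) (W : Om -> WT) (a0 : A).
Hypotheses (W_U_V : cond_mutual_info P W V U = 0) (W_V_U : cond_mutual_info P W U V = 0).

Let lawW_U a m := pr_of P (pairRV U W) (a, m) / pr_of P U a.
Let lawW_V b m := pr_of P (pairRV V W) (b, m) / pr_of P V b.

(* Both Markov chains give [p(m, a, b) = p(m | a) p(a, b) = p(m | b) p(a, b)]. *)
Let lawW_U_V w : P w != 0 -> lawW_U (U w) =1 lawW_V (V w).
Proof.
move=> P_neq0 m.
have P_gt0 : 0 < P w by rewrite lt_def P_neq0 P_ge0.
have pos (D : finType) (f : Om -> D) : 0 < pr_of P f (f w).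
  exact: lt_le_trans P_gt0 (pr_of_self P_ge0 f w).
have eU := (cond_mutual_info_eq0P P_ge0 _ _ _).1 W_U_V m (V w) (U w).
have eV := (cond_mutual_info_eq0P P_ge0 _ _ _).1 W_V_U m (U w) (V w).
have eWUV : pr_of P (pairRV (pairRV W V) U) (m, V w, U w) =
            pr_of P (pairRV (pairRV W U) V) (m, U w, V w).
  by apply: eq_bigl => w'; rewrite /pairRV !xpair_eqE andbAC.
rewrite eWUV (pr_of_pairC P V U) in eU.
rewrite /lawW_U /lawW_V (pr_of_pairC P U W) (pr_of_pairC P V W).
move: eU eV (pos _ U) (pos _ V) (pos _ (pairRV U V)).
move: (pr_of P (pairRV (pairRV W U) V) _) (pr_of P (pairRV U V) _) => x q.
move: (pr_of P U _) (pr_of P V _) (pr_of P (pairRV W U) _) (pr_of P (pairRV W V) _).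
move=> u v s t eU eV u_gt0 v_gt0 q_gt0.
have q_neq0 := lt0r_neq0 q_gt0.
have -> : s = x * u / q by rewrite eU mulfK.
have -> : t = x * v / q by rewrite eV mulfK.
by rewrite mulrAC mulfK ?lt0r_neq0 // mulrAC mulfK ?lt0r_neq0.
Qed.

(* The common function is the conditional law of [W] given [U], encoded by a
   representative of its level set so as to take values in [A], as
   [common_entropy] requires. *)
Let repU : {ffun A -> A} :=
  [ffun a => odflt a [pick a' | [forall m, lawW_U a' m == lawW_U a m]]].
Let repV : {ffun B -> A} :=
  [ffun b => odflt a0 [pick a' | [forall m, lawW_U a' m == lawW_V b m]]].

Let lawW_U_rep a : lawW_U (repU a) =1 lawW_U a.
Proof.
rewrite ffunE; case: pickP => [a' /forallP eq_a' m /=|]; first exact/eqP.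
by move/(_ a)/negbT/negP; case; apply/forallP.
Qed.

Let common_fun_rep : common_fun P U V repU repV.
Proof.
apply/forallP => w; apply/implyP => P_neq0; rewrite !ffunE.
have -> : [pick a' | [forall m, lawW_U a' m == lawW_U (U w) m]] =
          [pick a' | [forall m, lawW_U a' m == lawW_V (V w) m]].
  by apply: eq_pick => a' /=; apply: eq_forallb => m; rewrite lawW_U_V.
case: pickP => [//|/(_ (U w))/negbT/negP]; case.
by apply/forallP => m; rewrite lawW_U_V.
Qed.

Let same_law_cross a a' m : repU a' = repU a ->
  pr_of P (pairRV U W) (a', m) * pr_of P U a = pr_of P (pairRV U W) (a, m) * pr_of P U a'.
Proof.
move=> rep_aa'.
have pUW_le a1 : pr_of P (pairRV U W) (a1, m) <= pr_of P U a1.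
  by apply: pr_of_le => // w; rewrite xpair_eqE => /andP[].
have pUW_eq0 a1 : pr_of P U a1 = 0 -> pr_of P (pairRV U W) (a1, m) = 0.
  by move=> pU0; apply/eqP; rewrite eq_le pr_of_ge0 // andbT -pU0 pUW_le.
have [pU0|pU'_neq0] := eqVneq (pr_of P U a') 0.
  by rewrite pU0 (pUW_eq0 a') // mul0r mulr0.
have [pU0|pU_neq0] := eqVneq (pr_of P U a) 0.
  by rewrite pU0 (pUW_eq0 a) // mul0r mulr0.
apply/eqP; rewrite -eqr_div //; apply/eqP.
by rewrite -[LHS]/(lawW_U a' m) -[RHS]/(lawW_U a m) -lawW_U_rep rep_aa' lawW_U_rep.
Qed.

Let cond_mutual_info_rep : cond_mutual_info P U W (fun w => repU (U w)) = 0.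
Proof.
apply/(cond_mutual_info_eq0P P_ge0) => a m c.
rewrite (pr_of_pair_comp _ (pairRV U W) (fun t => repU t.1) (a, m) c).
rewrite (pr_of_pair_comp _ U repU) /=.
case: eqP => [<-|_]; last by rewrite !mul0r.
rewrite -(sum_pr_of_pair P U _ (repU a)) -(sum_pr_of_pair P U (pairRV W _) (m, repU a)).
rewrite !big_distrr /=; apply: eq_bigr => a' _.
have -> : pr_of P (pairRV U (pairRV W (fun w => repU (U w)))) (a', (m, repU a)) =
          pr_of P (pairRV (pairRV U W) (fun w => repU (U w))) ((a', m), repU a).
  by apply: eq_bigl => w; rewrite !xpair_eqE andbA.
rewrite (pr_of_pair_comp _ (pairRV U W) (fun t => repU t.1)) (pr_of_pair_comp _ U repU) /=.
by case: eqP => [rep_a'|_]; rewrite ?mulr0 // -same_law_cross // mulrC.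
Qed.

Lemma mutual_info_le_common_entropy : mutual_info P U W <= common_entropy P U V.
Proof.
pose C w := repU (U w).
have C_le : entropy P C <= common_entropy P U V.
  rewrite /common_entropy; apply: (@le_bigmax_cond _ _ _ _ (repU, repV) _
    (fun fg : {ffun A -> A} * {ffun B -> A} => entropy P (fun w => fg.1 (U w)))).
  exact: common_fun_rep.
have UC_U : entropy P (pairRV U C) = entropy P U.
  apply: entropy_same_info => w w'; rewrite /C xpair_eqE.
  by case: eqP => [->|]; rewrite ?eqxx.
have UWC_UW : entropy P (pairRV (pairRV U W) C) = entropy P (pairRV U W).
  apply: entropy_same_info => w w'; rewrite /C !xpair_eqE.
  by case: eqP => [->|]; rewrite ?eqxx ?andbT.
have W_le : entropy P W <= entropy P (pairRV W C).
  by apply: (entropy_le_determines P_ge0); solve_pair_eq.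
have := cond_mutual_info_rep; rewrite /cond_mutual_info /mutual_info -/C UC_U UWC_UW; lra.
Qed.

End CommonInformation.

Lemma residual_info_le_cond_mutual_info (R : realType) (Om : finType) (P : Om -> R)
    (A B MA MB WT : finType) (U : Om -> A) (V : Om -> B) (MU : Om -> MA)
    (MV : Om -> MB) (W : Om -> WT) :
  (forall w, 0 <= P w) -> A ->
  cond_entropy P U (pairRV MU W) = 0 -> cond_entropy P V (pairRV MV W) = 0 ->
  cond_mutual_info P W V U = 0 -> cond_mutual_info P W U V = 0 ->
  residual_info P U V <= cond_mutual_info P MU MV W.
Proof.
move=> P_ge0 a0 U_MUW V_MVW W_U_V W_V_U.
have := mutual_info_le_add_cond_mutual_info P_ge0 U_MUW V_MVW.
have := mutual_info_le_common_entropy P_ge0 a0 W_U_V W_V_U.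
rewrite /residual_info; lra.
Qed.

Record secret_sharing (R : realType) (Om SA SB SC MAB MBC MCA : finType) (P : Om -> R)
    (Sa : Om -> SA) (Sb : Om -> SB) (Sc : Om -> SC)
    (Mab : Om -> MAB) (Mbc : Om -> MBC) (Mca : Om -> MCA) : Prop := {
  recover_a : cond_entropy P Sa (pairRV Mab Mca) = 0;
  recover_b : cond_entropy P Sb (pairRV Mab Mbc) = 0;
  recover_c : cond_entropy P Sc (pairRV Mbc Mca) = 0;
  private_a : cond_mutual_info P (pairRV Mab Mca) (pairRV Sb Sc) Sa = 0;
  private_b : cond_mutual_info P (pairRV Mab Mbc) (pairRV Sa Sc) Sb = 0;
  private_c : cond_mutual_info P (pairRV Mbc Mca) (pairRV Sa Sb) Sc = 0 }.

Section SecretSharing.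
Variables (R : realType) (Om SA SB SC MAB MBC MCA : finType) (P : Om -> R).
Variables (Sa : Om -> SA) (Sb : Om -> SB) (Sc : Om -> SC)
  (Mab : Om -> MAB) (Mbc : Om -> MBC) (Mca : Om -> MCA).
Hypothesis SS : secret_sharing P Sa Sb Sc Mab Mbc Mca.

Lemma secret_sharing_swap : secret_sharing P Sb Sa Sc Mab Mca Mbc.
Proof.
case: SS => ra rb rc pa pb pc; split => //.
  by rewrite -rc; apply: cond_entropy_same_info; solve_pair_eq.
by rewrite -pc; apply: cond_mutual_info_same_info; solve_pair_eq.
Qed.

Lemma secret_sharing_rot : secret_sharing P Sb Sc Sa Mbc Mca Mab.
Proof.
case: SS => ra rb rc pa pb pc; split => //.
- by rewrite -rb; apply: cond_entropy_same_info; solve_pair_eq.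
- by rewrite -ra; apply: cond_entropy_same_info; solve_pair_eq.
- by rewrite -pb; apply: cond_mutual_info_same_info; solve_pair_eq.
- by rewrite -pc; apply: cond_mutual_info_same_info; solve_pair_eq.
- by rewrite -pa; apply: cond_mutual_info_same_info; solve_pair_eq.
Qed.

Hypotheses (P_ge0 : forall w, 0 <= P w) (P_sum1 : \sum_w P w = 1).

Lemma share_entropy_ge_cond_mutual_info :
  cond_mutual_info P Mab Mbc Mca + cond_entropy P (pairRV Sa Sb) Sc <= entropy P Mab.
Proof.
case: SS => ra rb rc _ _ pc.
have le_MabMca := entropy_pair_le P_ge0 P_sum1 Mab Mca.
pose M := pairRV (pairRV Mab Mbc) Mca.
pose MSa := pairRV M Sa; pose MSab := pairRV MSa Sb; pose MSabc := pairRV MSab Sc.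
have le_MSa : entropy P MSa + entropy P (pairRV Mab Mca) <=
    entropy P M + entropy P (pairRV Sa (pairRV Mab Mca)).
  by apply: entropy_submod => //; rewrite /MSa /M; solve_pair_eq.
have le_MSab : entropy P MSab + entropy P (pairRV Mab Mbc) <=
    entropy P MSa + entropy P (pairRV Sb (pairRV Mab Mbc)).
  by apply: entropy_submod => //; rewrite /MSab /MSa /M; solve_pair_eq.
have le_MSabc : entropy P MSabc + entropy P (pairRV Mbc Mca) <=
    entropy P MSab + entropy P (pairRV Sc (pairRV Mbc Mca)).
  by apply: entropy_submod => //; rewrite /MSabc /MSab /MSa /M; solve_pair_eq.
have le_all : entropy P (pairRV (pairRV (pairRV Mbc Mca) (pairRV Sa Sb)) Sc) <=
    entropy P MSabc.
  by apply: entropy_le_determines => //; rewrite /MSabc /MSab /MSa /M; solve_pair_eq.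
have le_McaSc : entropy P (pairRV Mbc Mca) <= entropy P (pairRV (pairRV Mbc Mca) Sc).
  by apply: entropy_le_determines => //; solve_pair_eq.
move: ra rb rc pc; rewrite /cond_mutual_info /cond_entropy; lra.
Qed.

Let Mca_Sc_Sa : cond_mutual_info P Mca Sc Sa = 0.
Proof.
apply/eqP; rewrite eq_le cond_mutual_info_ge0 // andbT -(private_a SS).
by apply: cond_mutual_info_le => //; solve_pair_eq.
Qed.

Let Mca_Sa_Sc : cond_mutual_info P Mca Sa Sc = 0.
Proof.
apply/eqP; rewrite eq_le cond_mutual_info_ge0 // andbT -(private_c SS).
by apply: cond_mutual_info_le => //; solve_pair_eq.
Qed.

Lemma share_entropy_ge : SA -> SC ->
  Num.max (residual_info P Sa Sc) (residual_info P Sc Sa)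
    + cond_entropy P (pairRV Sa Sb) Sc <= entropy P Mab.
Proof.
move=> sa sc; have := share_entropy_ge_cond_mutual_info.
have := residual_info_le_cond_mutual_info P_ge0 sa (recover_a SS) (recover_c SS)
  Mca_Sc_Sa Mca_Sa_Sc.
have := residual_info_le_cond_mutual_info P_ge0 sc (recover_c SS) (recover_a SS)
  Mca_Sa_Sc Mca_Sc_Sa.
rewrite cond_mutual_infoC addr_maxl ge_max; lra.
Qed.

End SecretSharing.

Theorem theorem10 (R : realType) (X Y Z M12 M23 M31 : finType)
  (p : X * Y * Z -> R) (q : X * Y * Z -> M12 * M23 * M31 -> R) :
  is_pmf p -> is_CMSS p q ->
  let P := joint p q in
  entropy P (@rvM12 X Y Z M12 M23 M31) >=
    Num.max (residual_info P rvX rvZ) (residual_info P rvY rvZ)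
    + cond_entropy P (pairRV rvX rvY) rvZ /\
  entropy P (@rvM23 X Y Z M12 M23 M31) >=
    Num.max (residual_info P rvX rvZ) (residual_info P rvX rvY)
    + cond_entropy P (pairRV rvY rvZ) rvX /\
  entropy P (@rvM31 X Y Z M12 M23 M31) >=
    Num.max (residual_info P rvY rvZ) (residual_info P rvX rvY)
    + cond_entropy P (pairRV rvX rvZ) rvY.
Proof.
move=> [p_ge0 p_sum1] [q_pmf [r1 [r2 [r3 [p1 [p2 p3]]]]]] P.
have P_ge0 w : 0 <= P w by rewrite mulr_ge0 //; case: (q_pmf w.1).
have P_sum1 : \sum_w P w = 1.
  rewrite -p_sum1 -(pair_bigA _ (fun s m => p s * q s m)) /=.
  by apply: eq_bigr => s _; rewrite -mulr_sumr; case: (q_pmf s) => _ ->; rewrite mulr1.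
have [[[x0 y0] z0] _] : exists s : X * Y * Z, true.
  case: (pickP (@predT (X * Y * Z))) => [s _|empty]; first by exists s.
  by move: p_sum1; rewrite (eq_bigl _ _ empty) big_pred0_eq => /eqP; rewrite eq_sym oner_eq0.
have S : secret_sharing P rvX rvY rvZ rvM12 rvM23 rvM31 by [].
have B_XY := share_entropy_ge S P_ge0 P_sum1 x0 z0.
have B_YX := share_entropy_ge (secret_sharing_swap S) P_ge0 P_sum1 y0 z0.
have B_YZ := share_entropy_ge (secret_sharing_rot S) P_ge0 P_sum1 y0 x0.
have B_ZY := share_entropy_ge (secret_sharing_swap (secret_sharing_rot S)) P_ge0 P_sum1 z0 x0.
have B_ZX := share_entropy_ge (secret_sharing_rot (secret_sharing_rot S)) P_ge0 P_sum1 z0 y0.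
have B_XZ := share_entropy_ge (secret_sharing_swap (secret_sharing_rot (secret_sharing_rot S)))
  P_ge0 P_sum1 x0 y0.
rewrite cond_entropy_pairC in B_YX; rewrite cond_entropy_pairC in B_ZY.
rewrite cond_entropy_pairC in B_ZX.
move: B_XY B_YX B_YZ B_ZY B_ZX B_XZ; rewrite !addr_maxl !ge_max.
move=> /andP[XZ_12 _] /andP[YZ_12 _] /andP[_ XY_23] /andP[_ XZ_23] /andP[_ YZ_31] /andP[XY_31 _].
by rewrite XZ_12 YZ_12 XY_23 XZ_23 YZ_31 XY_31.
Qed.
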